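(* Let $\mathcal{C}\subset\mathbb{R}^N$ be a nonempty compact convex set with Euclidean projection $\pi_{\mathcal{C}}$. For every $p\in\mathcal{C}$, every $r>0$ and every unit vector $u\in\mathbb{R}^N$ ($\|u\|=1$), $$\langle u,\pi_{\mathcal{C}}(p+ru)-p\rangle\ge\frac{r}{2}\,\|u\|_{\mathcal{C}}^2(p;r).$$
   Context: Local norm: for $p\in\mathcal{C}$, a vector $u$ and $r>0$, $\|u\|_{\mathcal{C}}(p;r)=\sup_{v\in\mathcal{C},\,\|v-p\|=r}\max\big(\langle u,v-p\rangle/r,\,0\big)$ if there exists $v\in\mathcal{C}$ with $\|v-p\|=r$, and $\|u\|_{\mathcal{C}}(p;r)=0$ otherwise. *)

From HB Require Import structures.
From mathcomp Require Import all_boot all_order all_algebra.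
From mathcomp Require Import all_classical all_reals all_analysis.
Set Implicit Arguments. Unset Strict Implicit. Unset Printing Implicit Defensive.
Import Order.TTheory GRing.Theory Num.Theory.
Import numFieldNormedType.Exports.
Local Open Scope classical_set_scope.
Local Open Scope ring_scope.

Section Defs.
Variables (R : realType) (N : nat).
Implicit Types (u v x : 'rV[R]_N) (C : set 'rV[R]_N).

Definition dotp u v : R := \sum_(i < N) u ord0 i * v ord0 i.
Definition enorm u : R := Num.sqrt (dotp u u).

Definition eproj C x : 'rV[R]_N :=
  xget 0 [set q | C q /\ forall v, C v -> enorm (x - q) <= enorm (x - v)].

Definition local_norm C p u (r : R) : R :=
  if `[< exists v, C v /\ enorm (v - p) = r >] then
    sup [set Num.max (dotp u (v - p) / r) 0 | v in [set v | C v /\ enorm (v - p) = r]]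
  else 0.

End Defs.

From HB Require Import structures.
From mathcomp Require Import all_boot all_order all_algebra.
From mathcomp Require Import all_classical all_reals all_analysis.
From mathcomp Require Import ring lra.
Import Order.TTheory GRing.Theory Num.Theory.
Import numFieldNormedType.Exports.
Local Open Scope classical_set_scope.
Local Open Scope ring_scope.

Set Implicit Arguments.
Unset Strict Implicit.

(* Write x = p + r u, q = pi_C(x) and D = <u, q - p>.  Since q is at least as
   close to x as every point p + t (v - p), t in [0,1], of a segment of C
   issuing from p, expanding the squared distances gives
   2 t r <u, v - p> - t^2 |v - p|^2 <= 2 r D.  For |v - p| = r and
   c = <u, v - p> > 0 (so c <= r by Cauchy-Schwarz), the choice t = c / r
   yields (c / r)^2 <= 2 D / r, and taking the supremum over such v bounds
   the squared local norm by 2 D / r. *)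

Section EuclideanGeometry.
Context {R : realType} {N : nat}.
Implicit Types (u v w x : 'rV[R]_N).

Lemma dotpC u v : dotp u v = dotp v u.
Proof. by apply: eq_bigr => i _; rewrite mulrC. Qed.

Lemma dotpDl u v w : dotp (u + v) w = dotp u w + dotp v w.
Proof. by rewrite /dotp -big_split; apply: eq_bigr => i _; rewrite mxE mulrDl. Qed.

Lemma dotpZl a u w : dotp (a *: u) w = a * dotp u w.
Proof. by rewrite /dotp mulr_sumr; apply: eq_bigr => i _; rewrite mxE mulrA. Qed.

Lemma dotpNl u w : dotp (- u) w = - dotp u w.
Proof. by rewrite /dotp -sumrN; apply: eq_bigr => i _; rewrite mxE mulNr. Qed.

Lemma dotpDr u v w : dotp w (u + v) = dotp w u + dotp w v.
Proof. by rewrite !(dotpC w) dotpDl. Qed.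

Lemma dotpZr a u w : dotp w (a *: u) = a * dotp w u.
Proof. by rewrite !(dotpC w) dotpZl. Qed.

Lemma dotpNr u w : dotp w (- u) = - dotp w u.
Proof. by rewrite !(dotpC w) dotpNl. Qed.

Lemma dotp_ge0 u : 0 <= dotp u u.
Proof. by apply: sumr_ge0 => i _; rewrite -expr2 sqr_ge0. Qed.

Lemma dotp_sqrBZ a x y :
  dotp (a *: x - y) (a *: x - y) =
  a ^+ 2 * dotp x x - 2 * a * dotp x y + dotp y y.
Proof. by rewrite !(dotpDl, dotpNl, dotpDr, dotpNr, dotpZl, dotpZr) (dotpC y x); ring. Qed.

Lemma enorm_sqr u : enorm u ^+ 2 = dotp u u.
Proof. by rewrite sqr_sqrtr ?dotp_ge0. Qed.

Lemma ler_enorm u v : (enorm u <= enorm v) = (dotp u u <= dotp v v).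
Proof. by rewrite ler_sqrt ?dotp_ge0. Qed.

Lemma continuous_sqr_dist x : continuous (fun v : 'rV[R]_N => dotp (x - v) (x - v)).
Proof.
rewrite /dotp; apply: continuous_big; first exact: add_continuous.
move=> i _.
have coordB : continuous (fun v : 'rV[R]_N => (x - v) ord0 i).
  rewrite (_ : (fun v => _) = (fun v => x ord0 i - v ord0 i)); last first.
    by apply: funext => v; rewrite !mxE.
  by move=> v; apply: continuousB; [exact: cst_continuous | exact: coord_continuous].
by move=> v; exact: continuousM (coordB v) (coordB v).
Qed.

End EuclideanGeometry.

Section Projection.
Context {R : realType} {N : nat}.
Variable C : set 'rV[R]_N.
Hypotheses (C0 : C !=set0) (cC : compact C).

Lemma eproj_nearest x :
  C (eproj C x) /\ forall v, C v -> enorm (x - eproj C x) <= enorm (x - v).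
Proof.
have [q Cq qmin] := EVT_min_rV C0 cC (continuous_subspaceT (continuous_sqr_dist (x := x))).
apply: (@xgetI _ 0 [set q | C q /\ forall v, C v -> enorm (x - q) <= enorm (x - v)] q).
split=> [|v Cv]; first by rewrite inE in Cq.
by rewrite ler_enorm; apply: qmin; rewrite inE.
Qed.

Hypothesis cvxC : convex_set C.

Lemma eproj_segment_ineq p u r v t : C p -> C v -> 0 <= t <= 1 ->
  2 * t * r * dotp u (v - p) - t ^+ 2 * dotp (v - p) (v - p)
    <= 2 * r * dotp u (eproj C (p + r *: u) - p).
Proof.
move=> Cp Cv /andP[t0 t1].
have [_ qmin] := eproj_nearest (p + r *: u).
set q := eproj C _ in qmin *.
have Cw : C (t *: v + (1 - t) *: p).
  by have := cvxC (Itv01 t0 t1) (mem_set Cv) (mem_set Cp); rewrite inE.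
have := qmin _ Cw; rewrite ler_enorm.
have -> : p + r *: u - q = r *: u - (q - p) by apply/rowP => i; rewrite !mxE; ring.
have -> : p + r *: u - (t *: v + (1 - t) *: p) = r *: u - t *: (v - p).
  by apply/rowP => i; rewrite !mxE; ring.
rewrite !dotp_sqrBZ !dotpZl !dotpZr.
by have := dotp_ge0 (q - p); lra.
Qed.

Lemma eproj_dotp_ge0 p u r : C p -> 0 < r -> 0 <= dotp u (eproj C (p + r *: u) - p).
Proof.
move=> Cp r0; have := eproj_segment_ineq u r Cp Cp (t := 0); rewrite lexx ler01 => /(_ isT).
by rewrite expr0n !mulr0 !mul0r subr0 pmulr_rge0 ?mulr_gt0.
Qed.

Lemma eproj_local_norm_term p u r v : C p -> 0 < r -> enorm u = 1 ->
  C v -> enorm (v - p) = r ->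
  Num.max (dotp u (v - p) / r) 0 ^+ 2 <= 2 * dotp u (eproj C (p + r *: u) - p) / r.
Proof.
move=> Cp r0 u1 Cv vpr.
have D0 := eproj_dotp_ge0 u Cp r0.
set c := dotp u (v - p); set D := dotp u _ in D0 *.
have [_ | c_gt0] := leP (c / r) 0.
  by rewrite expr0n /= divr_ge0 ?mulr_ge0 // ltW.
have uu : dotp u u = 1 by rewrite -enorm_sqr u1 expr1n.
have vpvp : dotp (v - p) (v - p) = r ^+ 2 by rewrite -enorm_sqr vpr.
have c_le_r : c <= r.
  by have := dotp_ge0 (r *: u - (v - p)); rewrite dotp_sqrBZ uu vpvp -/c; nra.
have cr_le1 : c / r <= 1 by rewrite ler_pdivrMr // mul1r.
have := eproj_segment_ineq u r Cp Cv (t := c / r); rewrite -/c -/D vpvp.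
rewrite ltW // cr_le1 => /(_ isT) ineq.
rewrite ler_pdivlMr // -(ler_pM2l r0).
have -> : r * ((c / r) ^+ 2 * r) = 2 * (c / r) * r * c - (c / r) ^+ 2 * r ^+ 2.
  by field; rewrite gt_eqF.
by rewrite [r * (2 * D)]mulrA [r * 2]mulrC.
Qed.

End Projection.

Lemma sup_sqr_le (R : realType) (S : set R) (b : R) : S !=set0 ->
  (forall s, S s -> 0 <= s /\ s ^+ 2 <= b) -> sup S ^+ 2 <= b.
Proof.
move=> [s0 Ss0] Sb; have [s0_ge0 s0b] := Sb _ Ss0.
have b0 : 0 <= b := le_trans (sqr_ge0 s0) s0b.
have ub : ubound S (Num.sqrt b).
  by move=> s /Sb[s_ge0 sb]; rewrite -(ger0_norm s_ge0) -sqrtr_sqr ler_sqrt.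
have sup_le : sup S <= Num.sqrt b by apply: ge_sup; first by exists s0.
have sup_ge0 : 0 <= sup S.
  by apply: le_trans s0_ge0 _; apply: ub_le_sup => //; exists (Num.sqrt b).
by rewrite -(sqr_sqrtr b0); nra.
Qed.

Lemma local_norm_sqr_le (R : realType) (N : nat) (C : set 'rV[R]_N) p u r b :
  0 <= b ->
  (forall v, C v -> enorm (v - p) = r -> Num.max (dotp u (v - p) / r) 0 ^+ 2 <= b) ->
  local_norm C p u r ^+ 2 <= b.
Proof.
move=> b0 Cb; rewrite /local_norm; case: asboolP => [[v0 [Cv0 v0r]] | _].
  apply: sup_sqr_le; first by exists (Num.max (dotp u (v0 - p) / r) 0), v0.
  by move=> _ [v [Cv vr] <-]; rewrite le_max lexx orbT Cb.
by rewrite expr0n.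
Qed.

Theorem theorem2p5 (R : realType) (N : nat) (C : set 'rV[R]_N) :
  C !=set0 -> compact C -> convex_set C ->
  forall (p u : 'rV[R]_N) (r : R), C p -> 0 < r -> enorm u = 1 ->
  dotp u (eproj C (p + r *: u) - p) >= r / 2 * (local_norm C p u r) ^+ 2.
Proof.
move=> C0 cC cvxC p u r Cp r0 u1.
set D := dotp u _.
have D0 : 0 <= D := eproj_dotp_ge0 C0 cC cvxC u Cp r0.
have L2 : local_norm C p u r ^+ 2 <= 2 * D / r.
  apply: local_norm_sqr_le; first by rewrite divr_ge0 ?mulr_ge0 // ltW.
  by move=> v Cv vr; apply: eproj_local_norm_term.
have -> : D = r / 2 * (2 * D / r) by field; rewrite gt_eqF.
by rewrite ler_pM2l // divr_gt0.
Qed.
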